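(* Let $\mathcal{D}$ be a combinatorial description of a simple pseudoline arrangement. Then there is a line arrangement realizing $\mathcal{D}$ in the Euclidean plane $\mathbb{R}^2$ if and only if there is a line arrangement realizing $\mathcal{D}$ in the hyperbolic plane $\mathbb{H}^2$.
   Context: A pseudoline arrangement $\mathcal{A}$ is a collection of pseudolines ($x$-monotone curves in $\mathbb{R}^2$) such that each pair of curves intersects at most once. Each pseudoline $\ell\in\mathcal{A}$ is oriented and thus divides the plane into two open half-planes $\ell^-$ and $\ell^+$. The arrangement is simple if any two (pseudo)lines intersect exactly once and no three intersect in the same point. For $\mathcal{A}=\{\ell_1,\dots,\ell_n\}$, each point $p$ gets a sign vector $\sigma(p)=(\sigma_i(p))_{i=1}^n\in\{-,0,+\}^n$, where $\sigma_i(p)=-$ if $p\in\ell_i^-$, $0$ if $p\in\ell_i$, and $+$ if $p\in\ell_i^+$. The combinatorial description $\mathcal{D}$ of $\mathcal{A}$ is the set $\{\sigma(p)\mid p\in\mathbb{R}^2\}$, and an arrangement with this set of sign vectors is said to realize $\mathcal{D}$. A line arrangement in $\mathbb{H}^2$ is an arrangement of (oriented) hyperbolic lines, with sign vectors and combinatorial description defined analogously over points of $\mathbb{H}^2$. *)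

From Stdlib Require Import Reals.
From mathcomp Require Import ssreflect ssrbool eqtype ssrnat fintype.
Set Implicit Arguments.
Unset Strict Implicit.
Open Scope R_scope.

Inductive sgn := Neg | Zero | Pos.

Definition sgnR (x : R) : sgn :=
  if Rlt_dec x 0 then Neg else if Rlt_dec 0 x then Pos else Zero.

Definition sgn_opp (s : sgn) : sgn :=
  match s with Neg => Pos | Zero => Zero | Pos => Neg end.

(* ---------- Pseudolines in R^2 ----------
   An (unbounded, x-monotone) pseudoline is the graph of a continuous
   function f : R -> R. *)
Record pseudoline := Pseudoline {
  pl_f : R -> R;
  pl_cont : continuity pl_f;
  pl_up : bool }.

Definition pl_sign (l : pseudoline) (p : R * R) : sgn :=
  let s := sgnR (snd p - pl_f l (fst p)) in
  if pl_up l then s else sgn_opp s.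

Definition simple_pl_arr (n : nat) (L : 'I_n -> pseudoline) : Prop :=
  (forall i j : 'I_n, i <> j ->
     exists x : R, pl_f (L i) x = pl_f (L j) x /\
       forall x' : R, pl_f (L i) x' = pl_f (L j) x' -> x' = x) /\
  (forall i j k : 'I_n, i <> j -> j <> k -> i <> k ->
     forall x : R, ~ (pl_f (L i) x = pl_f (L j) x /\ pl_f (L j) x = pl_f (L k) x)).

Record eline := ELine {
  el_a : R; el_b : R; el_c : R;
  el_nondeg : el_a <> 0 \/ el_b <> 0 }.

Definition el_sign (l : eline) (p : R * R) : sgn :=
  sgnR (el_a l * fst p + el_b l * snd p + el_c l).

(* ---------- Oriented lines in the hyperbolic plane H^2 ----------
   Hyperboloid model: H^2 = {(x,y,z) | x^2 + y^2 - z^2 = -1, z > 0}.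
   Hyperbolic lines are the (nonempty) intersections of H^2 with planes
   {a x + b y + c z = 0} through the origin, which meet H^2 iff
   c^2 < a^2 + b^2; positive side {a x + b y + c z > 0}. *)
Definition in_H2 (p : R * R * R) : Prop :=
  let '(x, y, z) := p in x * x + y * y - z * z = -1 /\ 0 < z.

Record hline := HLine {
  hl_a : R; hl_b : R; hl_c : R;
  hl_meets : hl_c * hl_c < hl_a * hl_a + hl_b * hl_b }.

Definition hl_sign (l : hline) (p : R * R * R) : sgn :=
  let '(x, y, z) := p in sgnR (hl_a l * x + hl_b l * y + hl_c l * z).

Definition comb_desc (n : nat) := ('I_n -> sgn) -> Prop.

Definition pl_realizes (n : nat) (L : 'I_n -> pseudoline) (D : comb_desc n) : Prop :=
  forall v : 'I_n -> sgn,
    D v <-> exists p : R * R, forall i : 'I_n, v i = pl_sign (L i) p.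

Definition euclid_realizes (n : nat) (L : 'I_n -> eline) (D : comb_desc n) : Prop :=
  forall v : 'I_n -> sgn,
    D v <-> exists p : R * R, forall i : 'I_n, v i = el_sign (L i) p.

Definition hyp_realizes (n : nat) (L : 'I_n -> hline) (D : comb_desc n) : Prop :=
  forall v : 'I_n -> sgn,
    D v <-> exists p : R * R * R, in_H2 p /\ forall i : 'I_n, v i = hl_sign (L i) p.

From Stdlib Require Import Reals Lra Psatz Classical.
From mathcomp Require Import ssreflect ssrfun ssrbool eqtype seq fintype.
Set Implicit Arguments.
Unset Strict Implicit.
Open Scope R_scope.

(* Identify the hyperbolic line {a x + b y + c z = 0} with the chord
   {a x + b y + c = 0} of the open unit disk (Klein model): the central
   projection (x, y, z) |-> (x/z, y/z) maps H^2 onto the disk and preserves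
   every sign, so a hyperbolic realization of D is an affine line arrangement
   whose sign vectors on the disk are exactly D.

   If D is the description of a simple pseudoline arrangement, then in every
   realization of D any two lines cross, inside the realizing region.
   Conversely, once every line and every crossing meets the disk, each cell of
   the plane meets the disk: from a point p walk to the first line hit, then
   along that line to the first crossing; this crossing lies in the closure of
   the cell of p, so points of that cell close to it lie in the open disk.  A
   Euclidean realization is put in this position by a homothety. *)

Lemma sgnR_pos x : 0 < x -> sgnR x = Pos.
Proof. by rewrite /sgnR => ?; case: (Rlt_dec x 0) => ?; [lra | case: (Rlt_dec 0 x)]. Qed.

Lemma sgnR_neg x : x < 0 -> sgnR x = Neg.
Proof. by rewrite /sgnR => ?; case: (Rlt_dec x 0). Qed.

Lemma sgnR_eq0 x : sgnR x = Zero <-> x = 0.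
Proof.
rewrite /sgnR; case: (Rlt_dec x 0) => ?; first by split=> // ?; lra.
by case: (Rlt_dec 0 x) => ?; split=> // ?; lra.
Qed.

Lemma sgnR_mul_pos x y : 0 < x * y -> sgnR x = sgnR y.
Proof.
move=> xy_gt0; case: (Rtotal_order x 0) => [x_lt0 | [x0 | x_gt0]].
- by rewrite !sgnR_neg //; nra.
- by move: xy_gt0; rewrite x0 Rmult_0_l; lra.
- by rewrite !sgnR_pos //; nra.
Qed.

Lemma sgnR_mulr x k : 0 < k -> sgnR (x * k) = sgnR x.
Proof.
move=> k_gt0; have [-> | x_neq0] := Req_dec x 0; first by rewrite Rmult_0_l.
by apply: sgnR_mul_pos; have := Rsqr_pos_lt x x_neq0; rewrite /Rsqr; nra.
Qed.

Definition sign_face (w u : R) : Prop := w = 0 \/ 0 < w * u.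

Lemma sign_face_trans w v u : sign_face w v -> sign_face v u -> sign_face w u.
Proof.
move=> [-> | wv_gt0]; first by left.
move=> [v0 | vu_gt0]; first by subst v; lra.
have v_neq0 : v <> 0 by move=> v0; rewrite v0 Rmult_0_r in wv_gt0; lra.
by right; have := Rsqr_pos_lt v v_neq0; rewrite /Rsqr; nra.
Qed.

Lemma sign_face_add u w : w * w <= u * u -> sign_face (u + w) u.
Proof.
move=> w_le_u; have [-> | uw_neq0] := Req_dec (u + w) 0; first by left.
by right; have := Rsqr_pos_lt _ uw_neq0; rewrite /Rsqr; nra.
Qed.

Lemma sgnR_convex_face w u e :
  sign_face w u -> 0 < e <= 1 -> sgnR ((1 - e) * w + e * u) = sgnR u.
Proof.
move=> wu e01; have [u0 | u_neq0] := Req_dec u 0.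
  move: wu; rewrite u0 Rmult_0_r => -[-> | ?]; last lra.
  by rewrite !Rmult_0_r Rplus_0_l.
apply: sgnR_mul_pos; have := Rsqr_pos_lt u u_neq0; rewrite /Rsqr.
by case: wu => [-> | ?]; nra.
Qed.

Lemma finite_upper_bound (T : finType) (f : T -> R) : exists M, forall x, f x <= M.
Proof.
suff [M leM] : exists M, forall x, x \in enum T -> f x <= M.
  by exists M => x; apply: leM; rewrite mem_enum.
elim: (enum T) => [|a s [M leM]]; first by exists 0.
exists (Rmax (f a) M) => x; rewrite in_cons => /orP [/eqP -> | /leM fx_le].
  exact: Rmax_l.
exact: Rle_trans fx_le (Rmax_r _ _).
Qed.

Lemma finite_argmin (T : finType) (P : T -> Prop) (h : T -> R) :
  (exists x, P x) -> exists k, P k /\ forall k', P k' -> h k <= h k'.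
Proof.
suff argmin_seq (s : seq T) : (exists x, x \in s /\ P x) ->
    exists k, P k /\ forall k', k' \in s -> P k' -> h k <= h k'.
  move=> [x Px]; have [|k [Pk kmin]] := argmin_seq (enum T).
    by exists x; rewrite mem_enum.
  by exists k; split=> // k'; apply: kmin; rewrite mem_enum.
elim: s => [[x []] // | a s IH] exPs.
have [/IH [k [Pk kmin]] | noPs] := classic (exists x, x \in s /\ P x).
  have [[Pa ha_lt] | ] := classic (P a /\ h a < h k).
    exists a; split=> // k'; rewrite in_cons => /orP [/eqP -> _ | k's Pk'].
      exact: Rle_refl.
    by have := kmin k' k's Pk'; lra.
  move=> not_a; exists k; split=> // k'; rewrite in_cons => /orP [/eqP -> Pa | ].
    by apply: Rnot_lt_le => ha_lt; apply: not_a.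
  exact: kmin.
have Pa : P a.
  case: exPs => x [+ Px]; rewrite in_cons => /orP [/eqP <- // | xs].
  by case: noPs; exists x.
exists a; split=> // k'; rewrite in_cons => /orP [/eqP -> _ | k's Pk'].
  exact: Rle_refl.
by case: noPs; exists k'.
Qed.

Record affine := Affine { la : R; lb : R; lc : R }.

Definition aval (l : affine) (p : R * R) : R := la l * p.1 + lb l * p.2 + lc l.
Definition nondeg (l : affine) : Prop := la l <> 0 \/ lb l <> 0.
Definition meets_disk (l : affine) : Prop := lc l * lc l < la l * la l + lb l * lb l.
Definition cross (l m : affine) : R := la l * lb m - la m * lb l.
Definition slope (l : affine) (d : R * R) : R := la l * d.1 + lb l * d.2.
Definition direction (l : affine) : R * R := (- lb l, la l).
Definition shift (p d : R * R) (t : R) : R * R := (p.1 + t * d.1, p.2 + t * d.2).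
(* Cramer's rule; junk when the lines are parallel. *)
Definition vertex (l m : affine) : R * R :=
  ((lb l * lc m - lb m * lc l) / cross l m, (lc l * la m - lc m * la l) / cross l m).
(* Foot of the perpendicular from the origin. *)
Definition foot (l : affine) : R * R :=
  let N := la l * la l + lb l * lb l in (- lc l * la l / N, - lc l * lb l / N).
Definition norm2 (p : R * R) : R := p.1 * p.1 + p.2 * p.2.
Definition in_disk (p : R * R) : Prop := norm2 p < 1.

Lemma aval_shift l p d t : aval l (shift p d t) = aval l p + t * slope l d.
Proof. by rewrite /aval /slope /=; ring. Qed.

Lemma slope_direction l m : slope m (direction l) = cross l m.
Proof. by rewrite /slope /cross /=; ring. Qed.

Lemma nondeg_norm_gt0 l : nondeg l -> 0 < la l * la l + lb l * lb l.
Proof.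
move=> l_nd; have := Rle_0_sqr (la l); have := Rle_0_sqr (lb l).
by case: l_nd => /Rsqr_pos_lt; rewrite /Rsqr; lra.
Qed.

Lemma meets_disk_nondeg l : meets_disk l -> nondeg l.
Proof.
rewrite /meets_disk /nondeg => lc_lt; apply: NNPP => /not_or_and [/NNPP a0 /NNPP b0].
by move: lc_lt; rewrite a0 b0; have := Rle_0_sqr (lc l); rewrite /Rsqr; lra.
Qed.

Lemma aval_foot l : nondeg l -> aval l (foot l) = 0.
Proof.
move=> /nondeg_norm_gt0 N_gt0; rewrite /aval /foot /=; field; lra.
Qed.

Lemma norm2_foot l : nondeg l ->
  norm2 (foot l) = lc l * lc l / (la l * la l + lb l * lb l).
Proof.
move=> /nondeg_norm_gt0 N_gt0; rewrite /norm2 /foot /=; field; lra.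
Qed.

Lemma in_disk_foot l : nondeg l -> in_disk (foot l) <-> meets_disk l.
Proof.
move=> l_nd; have N_gt0 := nondeg_norm_gt0 l_nd.
rewrite /in_disk /meets_disk norm2_foot //; split => lt.
  by have := Rmult_lt_compat_r _ _ _ N_gt0 lt; rewrite /Rdiv Rmult_assoc Rinv_l; lra.
by apply: (Rmult_lt_reg_r _ _ _ N_gt0); rewrite /Rdiv Rmult_assoc Rinv_l; lra.
Qed.

Lemma vertex_unique l m p :
  cross l m <> 0 -> aval l p = 0 -> aval m p = 0 -> p = vertex l m.
Proof.
case: p => x y; rewrite /aval /vertex /cross /= => cr_neq0 l0 m0.
have -> : lc l = - (la l * x + lb l * y) by lra.
have -> : lc m = - (la m * x + lb m * y) by lra.
by congr pair; field.
Qed.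

Lemma cross0_same_line l m q r : nondeg l -> cross l m = 0 ->
  aval l q = 0 -> aval m q = 0 -> aval l r = 0 -> aval m r = 0.
Proof.
case: q r => [x y] [x' y']; rewrite /nondeg /cross /aval /= => l_nd cr0 lq mq lr.
have lab : la l * (x' - x) + lb l * (y' - y) = 0 by lra.
have -> : la m * x' + lb m * y' + lc m = la m * (x' - x) + lb m * (y' - y) by lra.
case: l_nd => [a_neq0 | b_neq0].
  apply: (Rmult_eq_reg_l (la l)) => //.
  have -> : la l * (la m * (x' - x) + lb m * (y' - y))
    = la m * (la l * (x' - x) + lb l * (y' - y)) + (y' - y) * (la l * lb m - la m * lb l)
    by ring.
  by rewrite lab cr0; ring.
apply: (Rmult_eq_reg_l (lb l)) => //.
have -> : lb l * (la m * (x' - x) + lb m * (y' - y))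
  = lb m * (la l * (x' - x) + lb l * (y' - y)) - (x' - x) * (la l * lb m - la m * lb l)
  by ring.
by rewrite lab cr0; ring.
Qed.

Definition realized n (U : R * R -> Prop) (l : 'I_n -> affine) (v : 'I_n -> sgn) : Prop :=
  exists p, U p /\ forall i, v i = sgnR (aval (l i) p).

Definition plane (p : R * R) : Prop := True.

Lemma pl_sign_eq0 l p : pl_sign l p = Zero <-> pl_f l p.1 = p.2.
Proof.
have -> : pl_sign l p = Zero <-> sgnR (p.2 - pl_f l p.1) = Zero.
  by rewrite /pl_sign; case: (pl_up l); case: sgnR.
by rewrite sgnR_eq0; split=> ?; lra.
Qed.

Section SimpleArrangement.
Variables (n : nat) (L : 'I_n -> pseudoline) (D : comb_desc n).
Variables (U : R * R -> Prop) (l : 'I_n -> affine).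
Hypotheses (L_simple : simple_pl_arr L) (L_D : pl_realizes L D).
Hypothesis l_D : forall v, D v <-> realized U l v.

Lemma pl_point_realized p :
  exists q, U q /\ forall i, pl_sign (L i) p = sgnR (aval (l i) q).
Proof. by apply/l_D/L_D; exists p. Qed.

Lemma pl_crossing_realized i j : i <> j ->
  exists q, U q /\ aval (l i) q = 0 /\ aval (l j) q = 0.
Proof.
move=> ij; have [x [Lij _]] := L_simple.1 i j ij.
have [q [Uq q_signs]] := pl_point_realized (x, pl_f (L i) x).
by exists q; split=> //; split; apply/sgnR_eq0; rewrite -q_signs; apply/pl_sign_eq0.
Qed.

Hypothesis l_nondeg : forall i, nondeg (l i).

Lemma realized_cross_neq0 i j : i <> j -> cross (l i) (l j) <> 0.
Proof.
move=> ij cr0; have [x [_ x_unique]] := L_simple.1 i j ij.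
have [q [_ [liq ljq]]] := pl_crossing_realized ij.
have [r [_ r_signs]] := pl_point_realized (x + 1, pl_f (L i) (x + 1)).
have lir : aval (l i) r = 0 by apply/sgnR_eq0; rewrite -r_signs; apply/pl_sign_eq0.
have /sgnR_eq0 := cross0_same_line (l_nondeg i) cr0 liq ljq lir.
rewrite -r_signs => /pl_sign_eq0 /= Lji.
by have := x_unique (x + 1) (esym Lji); lra.
Qed.

Lemma realized_vertex i j : i <> j -> U (vertex (l i) (l j)).
Proof.
move=> ij; have [q [Uq [liq ljq]]] := pl_crossing_realized ij.
by rewrite -(vertex_unique (realized_cross_neq0 ij) liq ljq).
Qed.

End SimpleArrangement.

Definition in_closure n (l : 'I_n -> affine) (w p : R * R) : Prop :=
  forall i, sign_face (aval (l i) w) (aval (l i) p).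

Section Walk.
Variables (n : nat) (l : 'I_n -> affine).

Lemma in_closure_trans w q p : in_closure l w q -> in_closure l q p -> in_closure l w p.
Proof. by move=> wq qp i; apply: sign_face_trans (wq i) (qp i). Qed.

(* The line reached first has the least squared hitting time; before that
   time no line changes sign. *)
Lemma first_hit p d i0 : slope (l i0) d <> 0 ->
  exists j t, slope (l j) d <> 0 /\ aval (l j) (shift p d t) = 0 /\
    in_closure l (shift p d t) p.
Proof.
move=> i0_slope; pose time k := aval (l k) p / slope (l k) d.
have [j [j_slope j_min]] := @finite_argmin _ (fun k => slope (l k) d <> 0)
  (fun k => time k * time k) (ex_intro _ i0 i0_slope).
exists j, (- time j); split=> //; split; first by rewrite aval_shift /time; field.
move=> k; rewrite aval_shift; apply: sign_face_add.
have [k_slope0 | k_slope] := Req_dec (slope (l k) d) 0.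
  by rewrite k_slope0 !Rmult_0_r; have := Rle_0_sqr (aval (l k) p).
have -> : aval (l k) p * aval (l k) p = time k * time k * (slope (l k) d * slope (l k) d).
  by rewrite /time; field.
have -> : - time j * slope (l k) d * (- time j * slope (l k) d)
  = time j * time j * (slope (l k) d * slope (l k) d) by ring.
by apply: Rmult_le_compat_r (j_min k k_slope); apply: Rle_0_sqr.
Qed.

End Walk.

Section CellsMeetDomain.
Variables (n : nat) (l : 'I_n -> affine) (U : R * R -> Prop).
(* [e <= 1] keeps [shift w (p - w) e] on the segment from [w] to [p]. *)
Hypothesis U_open : forall w d, U w -> exists e, 0 < e <= 1 /\ U (shift w d e).
Hypothesis U_inhabited : exists w, U w.
Hypothesis l_nondeg : forall i, nondeg (l i).
Hypothesis l_meets_U : forall i, exists q, U q /\ aval (l i) q = 0.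
Hypothesis l_cross : forall i j, i <> j -> cross (l i) (l j) <> 0.
Hypothesis l_vertex : forall i j, i <> j -> U (vertex (l i) (l j)).

Lemma near_point_same_signs w p : U w -> in_closure l w p ->
  exists q, U q /\ forall i, sgnR (aval (l i) q) = sgnR (aval (l i) p).
Proof.
move=> Uw wp; have [e [e01 Uq]] := U_open (p.1 - w.1, p.2 - w.2) Uw.
exists (shift w (p.1 - w.1, p.2 - w.2) e); split=> // i.
have -> : aval (l i) (shift w (p.1 - w.1, p.2 - w.2) e)
  = (1 - e) * aval (l i) w + e * aval (l i) p by rewrite /aval /shift /=; ring.
exact: sgnR_convex_face.
Qed.

Lemma closure_meets_domain p : exists w, U w /\ in_closure l w p.
Proof.
have [[i0 _] | no_line] := classic (exists i0 : 'I_n, True); last first.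
  by have [w Uw] := U_inhabited; exists w; split=> // i; case: no_line; exists i.
have i0_slope : slope (l i0) (la (l i0), lb (l i0)) <> 0.
  by have := nondeg_norm_gt0 (l_nondeg i0); rewrite /slope /=; lra.
have [j0 [t1 [_ [on_j0 p1_p]]]] := first_hit p i0_slope.
set p1 := shift p _ t1 in on_j0 p1_p.
have [[j1 j1_j0] | only_j0] := classic (exists j1, j1 <> j0); last first.
  have [q [Uq on_j0_q]] := l_meets_U j0; exists q; split=> // k.
  have -> : k = j0 by apply: NNPP => k_j0; apply: only_j0; exists k.
  by left.
have j1_slope : slope (l j1) (direction (l j0)) <> 0.
  by rewrite slope_direction; apply: l_cross => j0_j1; apply: j1_j0.
have [j2 [t2 [j2_slope [on_j2 p2_p1]]]] := first_hit p1 j1_slope.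
have j0_j2 : j0 <> j2.
  by move=> j02; apply: j2_slope; rewrite -j02 slope_direction /cross; ring.
have on_j0' : aval (l j0) (shift p1 (direction (l j0)) t2) = 0.
  by rewrite aval_shift slope_direction on_j0 /cross; ring.
exists (shift p1 (direction (l j0)) t2); split; last exact: in_closure_trans p2_p1 p1_p.
by rewrite (vertex_unique (l_cross j0_j2) on_j0' on_j2); apply: l_vertex.
Qed.

Lemma realized_domainE v : realized U l v <-> realized plane l v.
Proof.
split=> [[p [_ vp]] | [p [_ vp]]]; first by exists p.
have [w [Uw wp]] := closure_meets_domain p.
have [q [Uq qp]] := near_point_same_signs Uw wp.
by exists q; split=> // i; rewrite qp.
Qed.

End CellsMeetDomain.

Lemma in_disk_open_rays w d : in_disk w -> exists e, 0 < e <= 1 /\ in_disk (shift w d e).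
Proof.
case: w d => [x y] [dx dy]; rewrite /in_disk /norm2 /shift /= => w_in.
set del := 1 - (x * x + y * y); set P := x * dx + y * dy.
set C := P * P + 1 + (dx * dx + dy * dy).
have C_ge1 : 1 <= C by have := Rle_0_sqr P; have := Rle_0_sqr dx; have := Rle_0_sqr dy;
  rewrite /Rsqr /C; lra.
set e := del / (2 * C).
have eC : e * (P * P + 1) + e * (dx * dx + dy * dy) = del / 2.
  have -> : del / 2 = e * C by rewrite /e; field; lra.
  by rewrite /C; ring.
have e_gt0 : 0 < e by rewrite /e /del; apply: Rdiv_lt_0_compat; lra.
have dd_ge0 : 0 <= dx * dx + dy * dy.
  by have := Rle_0_sqr dx; have := Rle_0_sqr dy; rewrite /Rsqr; lra.
have e_le : e <= 1 / 2.
  have := Rmult_le_pos _ _ (Rlt_le _ _ e_gt0) (Rle_0_sqr P).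
  have := Rmult_le_pos _ _ (Rlt_le _ _ e_gt0) dd_ge0.
  by have := Rle_0_sqr x; have := Rle_0_sqr y; rewrite /Rsqr /del in eC *; lra.
exists e; split; first lra.
have -> : (x + e * dx) * (x + e * dx) + (y + e * dy) * (y + e * dy)
  = x * x + y * y + 2 * e * P + e * e * (dx * dx + dy * dy) by rewrite /P; ring.
(* [2 P <= P^2 + 1] and [e^2 <= e]: the squared norm grows by at most [e C = del / 2]. *)
have : 2 * e * P <= e * (P * P + 1) by have := Rle_0_sqr (P - 1); rewrite /Rsqr; nra.
have : e * e * (dx * dx + dy * dy) <= e * (dx * dx + dy * dy) by nra.
by rewrite /del in eC; lra.
Qed.

Lemma in_disk0 : in_disk (0, 0).
Proof. by rewrite /in_disk /norm2 /=; lra. Qed.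

Lemma realized_diskE n (l : 'I_n -> affine) :
  (forall i, meets_disk (l i)) -> (forall i j, i <> j -> cross (l i) (l j) <> 0) ->
  (forall i j, i <> j -> in_disk (vertex (l i) (l j))) ->
  forall v, realized in_disk l v <-> realized plane l v.
Proof.
move=> l_meets l_cross l_vertex v.
have l_nondeg i := meets_disk_nondeg (l_meets i).
apply: (realized_domainE in_disk_open_rays (ex_intro _ _ in_disk0) l_nondeg _
  l_cross l_vertex).
by move=> i; exists (foot (l i)); split; [apply/in_disk_foot | apply: aval_foot].
Qed.

Definition scale_pt (k : R) (p : R * R) : R * R := (k * p.1, k * p.2).
Definition scale_line (K : R) (l : affine) : affine := Affine (la l) (lb l) (lc l / K).

Lemma aval_scale_line K l p : K <> 0 ->
  aval (scale_line K l) p = aval l (scale_pt K p) / K.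
Proof. by move=> K_neq0; rewrite /aval /scale_pt /=; field. Qed.

Lemma vertex_scale_line K l m : K <> 0 -> cross l m <> 0 ->
  vertex (scale_line K l) (scale_line K m) = scale_pt (/ K) (vertex l m).
Proof. by rewrite /vertex /scale_pt /cross /= => K_neq0 cr_neq0; congr pair; field. Qed.

Lemma foot_scale_line K l : K <> 0 -> nondeg l ->
  foot (scale_line K l) = scale_pt (/ K) (foot l).
Proof.
move=> K_neq0 /nondeg_norm_gt0 N_gt0.
by rewrite /foot /scale_pt /=; congr pair; field; lra.
Qed.

Lemma in_disk_scale K p : 1 <= K -> norm2 p < K -> in_disk (scale_pt (/ K) p).
Proof.
rewrite /in_disk /norm2 /scale_pt /= => K_ge1 p_lt.
have -> : / K * p.1 * (/ K * p.1) + / K * p.2 * (/ K * p.2)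
  = (p.1 * p.1 + p.2 * p.2) / (K * K) by field; lra.
apply: (Rmult_lt_reg_r (K * K)); first nra.
by rewrite /Rdiv Rmult_assoc Rinv_l; nra.
Qed.

Lemma realized_scale_line n (l : 'I_n -> affine) K v : 0 < K ->
  realized plane (fun i => scale_line K (l i)) v <-> realized plane l v.
Proof.
move=> K_gt0; have K_inv_gt0 := Rinv_0_lt_compat _ K_gt0.
split=> [[p [_ vp]] | [p [_ vp]]].
  exists (scale_pt K p); split=> // i.
  by rewrite vp aval_scale_line /Rdiv ?sgnR_mulr //; lra.
exists (scale_pt (/ K) p); split=> // i; rewrite vp aval_scale_line; last lra.
have -> : scale_pt K (scale_pt (/ K) p) = p.
  by case: p {vp} => x y; rewrite /scale_pt /=; congr pair; field; lra.
by rewrite /Rdiv sgnR_mulr.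
Qed.

Lemma scale_into_disk n (l : 'I_n -> affine) :
  (forall i, nondeg (l i)) -> (forall i j, i <> j -> cross (l i) (l j) <> 0) ->
  exists K, 0 < K /\ (forall i, meets_disk (scale_line K (l i))) /\
    (forall i j, i <> j -> in_disk (vertex (scale_line K (l i)) (scale_line K (l j)))).
Proof.
move=> l_nondeg l_cross.
have [M M_bound] := finite_upper_bound
  (fun ij : 'I_n * 'I_n => norm2 (foot (l ij.1)) + norm2 (vertex (l ij.1) (l ij.2))).
have norm2_ge0 p : 0 <= norm2 p.
  by have := Rle_0_sqr p.1; have := Rle_0_sqr p.2; rewrite /norm2 /Rsqr; lra.
set K := Rabs M + 1.
have K_ge1 : 1 <= K by have := Rabs_pos M; rewrite /K; lra.
have M_lt : M < K by have := Rle_abs M; rewrite /K; lra.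
exists K; split; first lra; split=> [i | i j ij].
  apply/(@in_disk_foot (scale_line K (l i)) (l_nondeg i)).
  rewrite foot_scale_line //; last lra.
  apply: in_disk_scale => //; have := M_bound (i, i).
  by have := norm2_ge0 (vertex (l i) (l i)); rewrite /=; lra.
rewrite vertex_scale_line; [| lra | exact: l_cross].
apply: in_disk_scale => //; have := M_bound (i, j).
by have := norm2_ge0 (foot (l i)); rewrite /=; lra.
Qed.

Definition el_affine (l : eline) : affine := Affine (el_a l) (el_b l) (el_c l).
Definition hl_affine (h : hline) : affine := Affine (hl_a h) (hl_b h) (hl_c h).

Lemma euclid_realizesE n (E : 'I_n -> eline) (D : comb_desc n) :
  euclid_realizes E D <-> forall v, D v <-> realized plane (fun i => el_affine (E i)) v.
Proof.
have same v : (exists p, forall i, v i = el_sign (E i) p) <->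
    realized plane (fun i => el_affine (E i)) v.
  by split=> [[p vp] | [p [_ vp]]]; exists p.
by split=> ED v; rewrite ED same.
Qed.

Lemma klein_projection p : in_H2 p ->
  exists q, in_disk q /\ forall h, hl_sign h p = sgnR (aval (hl_affine h) q).
Proof.
case: p => [[x y] z] [on_H z_gt0].
exists (x / z, y / z); split.
  rewrite /in_disk /norm2 /=.
  have -> : x / z * (x / z) + y / z * (y / z) = (x * x + y * y) / (z * z) by field; lra.
  apply: (Rmult_lt_reg_r (z * z)); first nra.
  by rewrite /Rdiv Rmult_assoc Rinv_l; nra.
move=> h; rewrite /hl_sign /aval /=.
have -> : hl_a h * (x / z) + hl_b h * (y / z) + hl_c h
  = (hl_a h * x + hl_b h * y + hl_c h * z) * / z by field; lra.
by rewrite sgnR_mulr //; apply: Rinv_0_lt_compat.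
Qed.

Lemma klein_lift q : in_disk q ->
  exists p, in_H2 p /\ forall h, hl_sign h p = sgnR (aval (hl_affine h) q).
Proof.
case: q => x y; rewrite /in_disk /norm2 /= => q_in.
set s := sqrt (1 - (x * x + y * y)).
have s_gt0 : 0 < s by apply: sqrt_lt_R0; lra.
have ss : s * s = 1 - (x * x + y * y) by apply: sqrt_sqrt; lra.
exists (x / s, y / s, 1 / s); split.
  split; last by apply: Rdiv_lt_0_compat; lra.
  have -> : x / s * (x / s) + y / s * (y / s) - 1 / s * (1 / s)
    = (x * x + y * y - 1) / (s * s) by field; lra.
  by rewrite ss; field; lra.
move=> h; rewrite /hl_sign /aval /=.
have -> : hl_a h * (x / s) + hl_b h * (y / s) + hl_c h * (1 / s)
  = (hl_a h * x + hl_b h * y + hl_c h) * / s by field; lra.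
by rewrite sgnR_mulr //; apply: Rinv_0_lt_compat.
Qed.

Lemma hyp_realizesE n (H : 'I_n -> hline) (D : comb_desc n) :
  hyp_realizes H D <-> forall v, D v <-> realized in_disk (fun i => hl_affine (H i)) v.
Proof.
have same v : (exists p, in_H2 p /\ forall i, v i = hl_sign (H i) p) <->
    realized in_disk (fun i => hl_affine (H i)) v.
  split=> [[p [/klein_projection [q [q_in qp]] vp]] | [q [/klein_lift [p [p_in pq]] vq]]].
    by exists q; split=> // i; rewrite vp qp.
  by exists p; split=> // i; rewrite vq pq.
by split=> HD v; rewrite HD same.
Qed.

Theorem proposition1 (n : nat) (D : comb_desc n) :
  (exists L : 'I_n -> pseudoline, simple_pl_arr L /\ pl_realizes L D) ->
  ((exists E : 'I_n -> eline, euclid_realizes E D) <->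
   (exists H : 'I_n -> hline, hyp_realizes H D)).
Proof.
move=> [L [L_simple L_D]]; split=> [[E E_D] | [H H_D]].
- set l := fun i => el_affine (E i).
  have l_D : forall v, D v <-> realized plane l v by apply/euclid_realizesE.
  have l_nondeg i : nondeg (l i) := el_nondeg (E i).
  have l_cross := realized_cross_neq0 L_simple L_D l_D l_nondeg.
  have [K [K_gt0 [l'_meets l'_vertex]]] := scale_into_disk l_nondeg l_cross.
  exists (fun i => HLine (l'_meets i)); apply/hyp_realizesE => v.
  by rewrite l_D -(realized_scale_line l v K_gt0) realized_diskE.
- set l := fun i => hl_affine (H i).
  have l_D : forall v, D v <-> realized in_disk l v by apply/hyp_realizesE.
  have l_meets i : meets_disk (l i) := hl_meets (H i).
  have l_nondeg i : nondeg (l i) := meets_disk_nondeg (l_meets i).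
  have l_cross := realized_cross_neq0 L_simple L_D l_D l_nondeg.
  have l_vertex := realized_vertex L_simple L_D l_D l_nondeg.
  exists (fun i => @ELine (la (l i)) (lb (l i)) (lc (l i)) (l_nondeg i)).
  apply/euclid_realizesE => v.
  by rewrite l_D realized_diskE.
Qed.
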